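(* Let $n\ge 1$, $V=\mathbb F_2^n$, $\rho\in\mathrm{Sym}(V)\setminus\mathrm{AGL}(V)$ and $\theta\in\mathrm{GL}(V)$. Define $\overline\rho,\overline\theta\in\mathrm{Sym}(V\times V)$ by $$(x,y)\overline\rho=(x+y,\ y+(x+y)\rho),\qquad (x,y)\overline\theta=((x+y)\theta,\ y).$$ If the group $\langle \rho, T_n\rangle\le \mathrm{Sym}(V)$ is primitive on $V$, then the group $\Gamma(\mathrm{LM}(\rho,\theta))=\langle \overline\rho,\overline\theta,T_{2n}\rangle\le\mathrm{Sym}(V\times V)$ is primitive on $V\times V$ (indeed already $\langle\overline\rho,T_{2n}\rangle$ is primitive).
   Context: Maps act on the right: $x\rho$ is the image of $x$ under $\rho$ and $fg$ means first $f$ then $g$. $T_n$ is the group of translations $\sigma_v:x\mapsto x+v$ ($v\in V$) of $V$, and $T_{2n}$ is the group of translations $\sigma_{(v,w)}:(x,y)\mapsto(x+v,y+w)$ of $V\times V$. $\mathrm{AGL}(V)$ is the group of affine permutations of $V$ and $\mathrm{GL}(V)$ the group of linear ones. A group $G$ acting on a set $M$ is primitive if it is transitive and there is no $G$-invariant partition of $M$ other than $\{M\}$ and the partition into singletons. The round functions of the Lai–Massey cipher $\mathrm{LM}(\rho,\theta)$ are $\overline\rho\,\overline\theta\,\sigma_{(k\theta,k)}$ for round keys $k\in V$, i.e. $(x,y)\mapsto((x+(x+y)\rho+k)\theta,\ y+(x+y)\rho+k)$, so $\Gamma(\mathrm{LM}(\rho,\theta))$ contains the group generated by these round functions. *)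

From mathcomp Require Import all_boot all_algebra all_fingroup all_solvable.
Set Implicit Arguments. Unset Strict Implicit. Unset Printing Implicit Defensive.
Import GRing.Theory.
Local Open Scope ring_scope.

(* V = F_2^n as row vectors; Sym(V) = {perm V}.  Maps act on the right:
   in MathComp, (s * t) x = t (s x), matching the paper's convention. *)
Notation V n := 'rV['F_2]_n.

Definition affine_perm n (rho : {perm V n}) : Prop :=
  exists (A : 'M['F_2]_n) (b : V n), forall x, rho x = x *m A + b.

Definition linear_perm n (theta : {perm V n}) : Prop :=
  exists A : 'M['F_2]_n, forall x, theta x = x *m A.

Definition transl_fun n (v : V n) (x : V n) : V n := x + v.
Lemma transl_inj n (v : V n) : injective (transl_fun v).
Proof. by move=> x y; rewrite /transl_fun => /addIr. Qed.
Definition transl n (v : V n) : {perm V n} := perm (@transl_inj n v).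

Definition transl2_fun n (vw : V n * V n) (xy : V n * V n) : V n * V n :=
  (xy.1 + vw.1, xy.2 + vw.2).
Lemma transl2_inj n (vw : V n * V n) : injective (transl2_fun vw).
Proof.
move=> [x1 y1] [x2 y2] [] /addIr -> /addIr -> //.
Qed.
Definition transl2 n (vw : V n * V n) : {perm V n * V n} :=
  perm (@transl2_inj n vw).

Definition Tn n : {set {perm V n}} := [set transl v | v : V n].
Definition T2n n : {set {perm V n * V n}} := [set transl2 vw | vw : V n * V n].

Definition rhobar_fun n (rho : {perm V n}) (xy : V n * V n) : V n * V n :=
  (xy.1 + xy.2, xy.2 + rho (xy.1 + xy.2)).
Lemma rhobar_inj n (rho : {perm V n}) : injective (rhobar_fun rho).
Proof.
move=> [x1 y1] [x2 y2] [] /= e1; rewrite e1 => /addIr e2.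
by move: e1; rewrite e2 => /addIr ->.
Qed.
Definition rhobar n (rho : {perm V n}) : {perm V n * V n} :=
  perm (@rhobar_inj n rho).

Definition thetabar_fun n (theta : {perm V n}) (xy : V n * V n) : V n * V n :=
  (theta (xy.1 + xy.2), xy.2).
Lemma thetabar_inj n (theta : {perm V n}) : injective (thetabar_fun theta).
Proof.
move=> [x1 y1] [x2 y2] [] /= /perm_inj e ey; move: e; rewrite ey => /addIr ->.
by [].
Qed.
Definition thetabar n (theta : {perm V n}) : {perm V n * V n} :=
  perm (@thetabar_inj n theta).

(* For a group G of permutations of a finite abelian group T that contains
   all translations, a block system of G is the coset partition of the
   block containing 0, and that block is a subgroup Z "respected" by every
   generator g, i.e. g (s + z) - g s lies in Z whenever z does.  Hence G is
   primitive iff its generators respect only the subgroups 0 and T; one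
   direction needs no translations.

   The heart of the proof is the lemma that rhobar respects no proper
   nontrivial subgroup U of V x V.  Let X be the first projection of U and
   Y = {y | (0, y) in U}.  Comparing rhobar at (s, 0) and (s, 0) + u shows
   that rho respects both X and Y; so each is 0 or V.  If Y = V then
   U = V x V; if X = Y = 0 then U = 0; and if Y = 0, X = V, then all second
   differences of rho vanish, so rho is affine over F_2, a contradiction.
   The theorem follows, since both groups contain rhobar and T_2n. *)

From HB Require Import structures.
From mathcomp Require Import all_boot all_algebra all_fingroup all_solvable zify.
Set Implicit Arguments. Unset Strict Implicit. Unset Printing Implicit Defensive.
Import GRing.Theory.

Section AdditiveBlocks.
Variable T : finZmodType.
Local Open Scope group_scope.
Local Open Scope ring_scope.
Implicit Types (Z : {set T}) (A : {set {perm T}}).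

Definition is_addsubgroup Z := 0 \in Z /\ {in Z &, forall a b, a - b \in Z}.

Definition respects (f : {perm T}) Z := forall s z, z \in Z -> f (s + z) - f s \in Z.

Definition coset Z s := [set x | x - s \in Z].

Definition cosets Z := [set coset Z s | s : T].

Lemma addsubgroupN Z : is_addsubgroup Z -> {in Z, forall b, - b \in Z}.
Proof. by move=> [Z0 ZB] b Zb; rewrite -sub0r ZB. Qed.

Lemma addsubgroupD Z : is_addsubgroup Z -> {in Z &, forall a b, a + b \in Z}.
Proof. by move=> hZ a b Za Zb; rewrite -[b]opprK hZ.2 // addsubgroupN. Qed.

Lemma coset_refl Z s : is_addsubgroup Z -> s \in coset Z s.
Proof. by move=> hZ; rewrite inE subrr hZ.1. Qed.

Lemma coset_eq Z s x : is_addsubgroup Z -> x \in coset Z s -> coset Z x = coset Z s.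
Proof.
move=> hZ; rewrite inE => hx; apply/setP => y; rewrite !inE.
apply/idP/idP => h.
  by have := addsubgroupD hZ h hx; rewrite addrA subrK.
by have := hZ.2 _ _ h hx; rewrite opprB addrA subrK.
Qed.

(* Cosets are translates of Z, hence have its size. *)
Lemma card_coset Z s : #|coset Z s| = #|Z|.
Proof.
have -> : coset Z s = [set x + s | x in Z].
  apply/setP => y; rewrite inE; apply/idP/imsetP => [h|[x hx ->]].
    by exists (y - s); rewrite ?subrK.
  by rewrite addrK.
by rewrite card_imset //; apply: addIr.
Qed.

Lemma cosets_partition Z : is_addsubgroup Z -> partition (cosets Z) [set: T].
Proof.
move=> hZ; apply/and3P; split.
- apply/eqP/setP => x; rewrite inE; apply/bigcupP; exists (coset Z x).
    exact: imset_f.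
  exact: coset_refl.
- apply/trivIsetP => _ _ /imsetP[s _ ->] /imsetP[t _ ->] hne.
  apply/pred0P => x /=; apply/negbTE/negP => /andP[hs ht].
  by move: hne; rewrite -(coset_eq hZ hs) -(coset_eq hZ ht) eqxx.
- by apply/imsetP => [[s _]] /setP /(_ s); rewrite coset_refl // inE.
Qed.

Lemma card_cosets Z : is_addsubgroup Z -> (#|cosets Z| * #|Z|)%N = #|T|.
Proof.
move=> hZ; rewrite -cardsT (card_partition (cosets_partition hZ)).
rewrite -sum_nat_const; apply: eq_bigr => _ /imsetP[s _ ->].
by rewrite card_coset.
Qed.

Lemma cosets_acts A Z :
  is_addsubgroup Z -> {in A, forall a, respects a Z} ->
  [acts <<A>>, on cosets Z | 'P^*].
Proof.
move=> hZ Aresp; rewrite gen_subG; apply/subsetP => a Aa; rewrite !inE.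
apply/subsetP => _ /imsetP[s _ ->]; rewrite inE; apply/imsetP; exists (a s) => //.
apply/eqP; rewrite eqEcard; apply/andP; split.
  apply/subsetP => _ /imsetP[x hx ->]; rewrite inE /= apermE.
  move: hx; rewrite inE => hx.
  by have := Aresp a Aa s _ hx; rewrite (addrC s) subrK.
by rewrite /= card_imset ?card_coset //; apply: perm_inj.
Qed.

(* A primitive group respects only the trivial subgroups, since the cosets *)
(* of any other respected subgroup would form a block system. *)
Lemma primitive_respected_trivial A Z :
  [primitive <<A>>, on [set: T] | 'P] ->
  is_addsubgroup Z -> {in A, forall a, respects a Z} ->
  Z = [set 0] \/ Z = [set: T].
Proof.
move=> /andP[_ /existsPn noQ] hZ Aresp.
have [->|Z_n0] := eqVneq Z [set 0]; first by left.
have [->|Z_nT] := eqVneq Z [set: T]; first by right.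
have Z_gt1 : (1 < #|Z|)%N.
  apply/card_gt1P; have [z Zz z0] : exists2 z, z \in Z & z != 0.
    apply/exists_inP; apply: contraNT Z_n0 => /exists_inPn Z0.
    apply/eqP/setP => x; rewrite inE; apply/idP/eqP => [Zx|->]; last exact: hZ.1.
    by apply/eqP; rewrite -[_ == _]negbK Z0.
  by exists z, 0; rewrite Zz hZ.1 z0.
have Z_ltT : (#|Z| < #|T|)%N.
  by rewrite -cardsT proper_card // properEneq Z_nT subsetT.
case/negP: (noQ (cosets Z)); apply/and3P; split.
- exact: cosets_partition.
- exact: cosets_acts.
- rewrite cardsT; move: (card_cosets hZ) Z_gt1 Z_ltT.
  move: #|cosets Z| #|Z| #|T| => c z t *; apply/andP; split; nia.
Qed.

Definition contains_translations A :=
  forall v, exists2 g, g \in A & forall x, g x = x + v.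

Lemma translations_sub A (B : {set {perm T}}) :
  contains_translations A -> A \subset B -> contains_translations B.
Proof. by move=> htr sAB v; have [g Ag hg] := htr v; exists g; rewrite ?(subsetP sAB). Qed.

Lemma translation_respects (g : {perm T}) v Z :
  (forall x, g x = x + v) -> respects g Z.
Proof. by move=> hg s z Zz; rewrite !hg opprD addrACA subrr addr0 addrAC subrr add0r. Qed.

Lemma translations_transitive A :
  contains_translations A -> [transitive <<A>>, on [set: T] | 'P].
Proof.
move=> htr; apply/imsetP; exists 0 => //; apply/setP => y; rewrite inE.
apply/esym/orbitP; have [g Ag hg] := htr y; exists g; first exact: mem_gen.
by change (g 0 = y); rewrite hg add0r.
Qed.

Section BlockOfZero.
Variables (A : {set {perm T}}) (Q : {set {set T}}).
Hypotheses (A_transl : contains_translations A)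
  (Q_part : partition Q [set: T]) (Q_acts : [acts <<A>>, on Q | 'P^*]).

Lemma block_image g X : g \in A -> X \in Q -> [set g x | x in X] \in Q.
Proof.
move=> Ag QX; have gN : g \in ('N(Q | 'P^*))%g.
  by apply: (subsetP Q_acts); exact: mem_gen.
by move: (astabs_act X gN); rewrite QX.
Qed.

Lemma pblock_in x : pblock Q x \in Q.
Proof. by rewrite pblock_mem // (cover_partition Q_part). Qed.

Lemma pblock_refl x : x \in pblock Q x.
Proof. by rewrite mem_pblock (cover_partition Q_part). Qed.

Lemma pblock_image g x : g \in A -> pblock Q (g x) = [set g y | y in pblock Q x].
Proof.
move=> Ag; apply: def_pblock; first exact: (partition_trivIset Q_part).
  exact: block_image (pblock_in x).
by apply: imset_f; exact: pblock_refl.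
Qed.

Lemma pblock_coset v : pblock Q v = coset (pblock Q 0) v.
Proof.
have [g Ag hg] := A_transl v; have := pblock_image 0 Ag; rewrite hg add0r => ->.
apply/setP => y; rewrite inE; apply/imsetP/idP => [[x x0 ->]|h].
  by rewrite hg addrK.
by exists (y - v); rewrite ?hg ?subrK.
Qed.

Lemma pblock0_addsubgroup : is_addsubgroup (pblock Q 0).
Proof.
split; first exact: pblock_refl.
move=> a b a0 b0; have b_block : pblock Q b = pblock Q 0.
  exact: def_pblock (partition_trivIset Q_part) (pblock_in 0) b0.
by move: a0; rewrite -{1}b_block pblock_coset inE.
Qed.

Lemma pblock0_respected : {in A, forall a, respects a (pblock Q 0)}.
Proof.
move=> a Aa s z z0; have : a (s + z) \in pblock Q (a s).
  by rewrite pblock_image // imset_f // pblock_coset inE (addrC s) addrK.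
by rewrite pblock_coset inE.
Qed.

Lemma partition_cosets : Q = cosets (pblock Q 0).
Proof.
apply/setP => X; apply/idP/imsetP => [QX|[s _ ->]]; last first.
  by rewrite -pblock_coset pblock_in.
have /set0Pn[x Xx] : X != set0.
  by apply: contraTneq QX => ->; have /and3P[] := Q_part.
exists x => //; rewrite -pblock_coset.
by apply/esym/def_pblock => //; exact: partition_trivIset Q_part.
Qed.

End BlockOfZero.

Lemma respected_trivial_primitive A :
  contains_translations A ->
  (forall Z, is_addsubgroup Z -> {in A, forall a, respects a Z} ->
     Z = [set 0] \/ Z = [set: T]) ->
  [primitive <<A>>, on [set: T] | 'P].
Proof.
move=> htr hZ; rewrite /primitive translations_transitive //=.
apply/existsPn => Q; apply/negP => /and3P[Q_part Q_acts]; rewrite cardsT.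
have Z_sub := pblock0_addsubgroup htr Q_part Q_acts.
have := card_cosets Z_sub; rewrite -(partition_cosets htr Q_part Q_acts).
by case: (hZ _ Z_sub (pblock0_respected htr Q_part Q_acts)) => ->;
  rewrite ?cards1 ?cardsT; move: #|Q| #|T| => q t *; apply/negP; nia.
Qed.

End AdditiveBlocks.

(* A product of finite abelian groups is a finite abelian group; this makes *)
(* V n x V n, with coordinatewise addition, an instance of the above. *)
HB.instance Definition _ (M1 M2 : finZmodType) := Finite.on (M1 * M2)%type.

Section CharacteristicTwo.
Variable n : nat.
Local Open Scope ring_scope.
Implicit Types x y : V n.

Lemma addxx x : x + x = 0.
Proof.
rewrite -mulr2n -scaler_nat.
by rewrite (_ : 2%:R = 0 :> 'F_2) ?scale0r //; apply/val_inj.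
Qed.

Lemma oppV x : - x = x.
Proof. by apply/esym/eqP; rewrite -addr_eq0 addxx. Qed.

Lemma addKV x y : x + (x + y) = y.
Proof. by rewrite addrA addxx add0r. Qed.

Lemma addVK x y : x + y + y = x.
Proof. by rewrite -addrA addxx addr0. Qed.

Lemma F2_cases (c : 'F_2) : c = 0 \/ c = 1.
Proof. by case: c => [[|[|k]] ck] //; [left | right]; apply/val_inj. Qed.

(* Over F_2 every additive map of V n is linear, hence given by a matrix. *)
Lemma additive_matrix (f : V n -> V n) : (forall x y, f (x + y) = f x + f y) ->
  exists M : 'M['F_2]_n, forall x, f x = x *m M.
Proof.
move=> fD; have f0 : f 0 = 0 by apply: (addIr (f 0)); rewrite -fD addr0 add0r.
have fZ (c : 'F_2) x : f (c *: x) = c *: f x.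
  by case: (F2_cases c) => ->; rewrite ?scale0r ?scale1r.
exists (\matrix_(i, j) f (delta_mx 0 i) 0 j) => x.
rewrite {1}(row_sum_delta x) (big_morph f fD f0).
apply/rowP => k; rewrite !mxE summxE; apply: eq_bigr => j _.
by rewrite fZ !mxE.
Qed.

End CharacteristicTwo.

Section RhobarRespected.
Variables (n : nat) (rho : {perm V n}) (U : {set V n * V n}).
Hypotheses (U_sub : is_addsubgroup U) (U_resp : respects (rhobar rho) U).
Local Open Scope ring_scope.

Lemma U_add a b c d : (a, b) \in U -> (c, d) \in U -> (a + c, b + d) \in U.
Proof. by move=> h1 h2; apply: (addsubgroupD U_sub h1 h2). Qed.

(* Comparing rhobar at (s, 0) and at (s, 0) + u. *)
Lemma rhobar_shift s u : u \in U ->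
  (u.1 + u.2, u.2 + rho (s + (u.1 + u.2)) + rho s) \in U.
Proof.
case: u => u1 u2 hu; have := U_resp (s, 0) hu.
rewrite !permE /rhobar_fun /= !add0r !addr0.
have -> : forall a b c d : V n, (a, b) - (c, d) = (a - c, b - d) by [].
by rewrite !oppV -!(addrA s u1 u2) [X in (X, _)]addrC addKV.
Qed.

(* The case s = 0 gives an injective map of U into itself, hence a bijection. *)
Definition shift (u : V n * V n) := (u.1 + u.2, u.2 + rho (u.1 + u.2) + rho 0).

Lemma shift_mem u : u \in U -> shift u \in U.
Proof. by move=> hu; have := rhobar_shift 0 hu; rewrite add0r. Qed.

Lemma shift_inj : injective shift.
Proof.
move=> [a b] [c d] [] /= e1; rewrite e1 => /addIr /addIr e2.
by move: e1; rewrite e2 => /addIr ->.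
Qed.

Lemma shift_onto v : v \in U -> exists2 u, u \in U & v = shift u.
Proof.
have shiftU : shift @: U = U.
  apply/eqP; rewrite eqEcard (card_imset _ shift_inj) leqnn andbT.
  by apply/subsetP => _ /imsetP[u hu ->]; exact: shift_mem.
by rewrite -{1}shiftU => /imsetP[u hu ->]; exists u.
Qed.

Definition projU := [set x | [exists y, (x, y) \in U]].
Definition kerU := [set y | (0, y) \in U].

Lemma projU_mem x y : (x, y) \in U -> x \in projU.
Proof. by move=> h; rewrite inE; apply/existsP; exists y. Qed.

Lemma projUP x : x \in projU -> exists y, (x, y) \in U.
Proof. by rewrite inE => /existsP. Qed.

Lemma projU_sub : is_addsubgroup projU.
Proof.
split; first exact: (projU_mem U_sub.1).
move=> a b /projUP[ya ha] /projUP[yb hb]; rewrite oppV.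
exact: projU_mem (U_add ha hb).
Qed.

Lemma kerU_sub : is_addsubgroup kerU.
Proof.
split; first by rewrite inE; exact: U_sub.1.
by move=> a b; rewrite !inE oppV => ha hb; have := U_add ha hb; rewrite addr0.
Qed.

(* Second coordinates of U lie in X, as u.2 = u.1 + (shift u).1. *)
Lemma snd_projU u : u \in U -> u.2 \in projU.
Proof.
case: u => u1 u2 hu.
have := addsubgroupD projU_sub (projU_mem hu) (projU_mem (shift_mem hu)).
by rewrite addKV.
Qed.

(* An element (0, y) of U comes from (y, y) under shift, so (y, 0) is in U. *)
Lemma kerU_diag y : y \in kerU -> (y, 0) \in U.
Proof.
rewrite inE => hy; have [[u1 u2] hu [e1 e2]] := shift_onto hy.
rewrite /= -e1 addVK in e2.
have u12 : u1 = u2 by rewrite -(addVK u1 u2) -e1 add0r.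
rewrite u12 -e2 in hu; have := U_add hu hy.
by rewrite addr0 addxx.
Qed.

(* rho respects Y and X: read off the second coordinate of rhobar_shift. *)
Lemma kerU_resp : respects rho kerU.
Proof.
move=> s y hy; rewrite oppV inE.
have := U_add (rhobar_shift s (kerU_diag hy)) (kerU_diag hy).
by rewrite /= !addr0 add0r addxx.
Qed.

Lemma projU_resp : respects rho projU.
Proof.
move=> s x /projUP[y hxy]; rewrite oppV.
have [u hu [e1 _]] := shift_onto hxy.
have := addsubgroupD projU_sub (snd_projU hu) (snd_projU (rhobar_shift s hu)).
by rewrite /= -e1 -addrA addKV.
Qed.

Lemma kerU_full : kerU = [set: V n] -> U = [set: V n * V n].
Proof.
move=> kerT; apply/setP => [[a b]]; rewrite inE.
have ha : (a, 0) \in U by apply: kerU_diag; rewrite kerT.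
have hb : (0, b) \in U by move: (in_setT b); rewrite -kerT inE.
by have := U_add ha hb; rewrite addr0 add0r.
Qed.

Lemma kerU_projU_trivial : kerU = [set 0] -> projU = [set 0] -> U = [set 0].
Proof.
move=> ker0 proj0; apply/setP => [[a b]]; rewrite inE.
apply/idP/eqP => [h|[-> ->]]; last exact: U_sub.1.
have : a \in projU := projU_mem h; rewrite proj0 inE => /eqP a0; subst a.
have : b \in kerU by rewrite inE; exact: h.
by rewrite ker0 inE => /eqP b0; subst b.
Qed.

(* If the kernel is trivial and the projection is onto, then the second   *)
(* differences of rho vanish, i.e. rho is affine.                         *)
Lemma kerU_projU_affine : kerU = [set 0] -> projU = [set: V n] -> affine_perm rho.
Proof.
move=> ker0 projT.
have rhoD s w : rho (s + w) + rho w + (rho s + rho 0) = 0.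
  have /projUP[y hy] : w \in projU by rewrite projT inE.
  have [u hu [e1 _]] := shift_onto hy; rewrite /= in e1.
  have := U_add (rhobar_shift s hu) (rhobar_shift 0 hu).
  rewrite /= -e1 addxx add0r => h.
  have : u.2 + rho (s + w) + rho s + (u.2 + rho w + rho 0) \in kerU by rewrite inE.
  by rewrite ker0 inE addrACA [X in X + _]addrACA addxx add0r addrACA => /eqP.
have [M hM] : exists M : 'M['F_2]_n, forall x, rho x + rho 0 = x *m M.
  apply: (additive_matrix (f := fun x => rho x + rho 0)) => s w.
  have -> : rho (s + w) = rho w + (rho s + rho 0).
    by apply/eqP; rewrite -subr_eq0 oppV addrA rhoD.
  by rewrite -addrA addrCA.
by exists M, (rho 0) => x; rewrite -hM addVK.
Qed.

End RhobarRespected.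

Lemma rhobar_respected_trivial n (rho : {perm V n}) :
  (forall Z : {set V n}, is_addsubgroup Z -> respects rho Z ->
     Z = [set 0%R] \/ Z = [set: V n]) ->
  ~ affine_perm rho ->
  forall U : {set V n * V n}, is_addsubgroup U -> respects (rhobar rho) U ->
    U = [set 0%R] \/ U = [set: V n * V n].
Proof.
move=> rho_blocks rho_naff U U_sub U_resp.
have [ker0|kerT] := rho_blocks _ (kerU_sub U_sub) (kerU_resp U_sub U_resp).
  have [proj0|projT] := rho_blocks _ (projU_sub U_sub) (projU_resp U_sub U_resp).
    by left; apply: (kerU_projU_trivial U_sub).
  by case: rho_naff; apply: (kerU_projU_affine U_sub U_resp).
by right; apply: (kerU_full U_sub U_resp).
Qed.

Lemma Tn_translations n : contains_translations (Tn n).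
Proof. by move=> v; exists (transl v); rewrite ?imset_f // => x; rewrite permE. Qed.

Lemma T2n_translations n : contains_translations (T2n n).
Proof. by move=> v; exists (transl2 v); rewrite ?imset_f // => x; rewrite permE. Qed.

Lemma Tn_respects n (Z : {set V n}) : {in Tn n, forall a, respects a Z}.
Proof.
move=> _ /imsetP[v _ ->]; apply: (translation_respects (v := v)) => x.
by rewrite permE.
Qed.

Local Open Scope group_scope.

Theorem theorem3p3 (n : nat) (hn : (1 <= n)%N)
    (rho theta : {perm V n})
    (hrho : ~ affine_perm rho) (htheta : linear_perm theta)
    (hprim : [primitive << rho |: Tn n >>, on [set: V n] | 'P]) :
  [primitive << rhobar rho |: (thetabar theta |: T2n n) >>,
     on [set: V n * V n] | 'P]
  /\ [primitive << rhobar rho |: T2n n >>, on [set: V n * V n] | 'P].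
Proof.
have rho_blocks (Z : {set V n}) : is_addsubgroup Z -> respects rho Z ->
    Z = [set 0%R] \/ Z = [set: V n].
  move=> Z_sub rho_resp; apply: (primitive_respected_trivial hprim Z_sub).
  by move=> a /setU1P[-> // | /Tn_respects]; apply.
have rhobar_blocks := rhobar_respected_trivial rho_blocks hrho.
have primitive_over (A : {set {perm V n * V n}}) : rhobar rho \in A -> T2n n \subset A ->
    [primitive <<A>>, on [set: V n * V n] | 'P].
  move=> rhoA T2nA; apply: respected_trivial_primitive.
    exact: translations_sub (@T2n_translations n) T2nA.
  by move=> U U_sub U_resp; apply: rhobar_blocks U_sub (U_resp _ rhoA).
split; apply: primitive_over; rewrite ?setU11 //.
  by apply/subsetP => g T2n_g; rewrite !inE T2n_g !orbT.
exact: subsetU1.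
Qed.
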